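(* For any $R>0$ and any finite sequence of intervals $([x_i,y_i])_{i=1}^m$ (with $x_i\le y_i$), there exists a sequence of intervals $([s_i,t_i])_{i=1}^{m'}$ with $m'\le m$ such that: each $s_i$ belongs to $\{x_1,\dots,x_m\}$ and each $t_i$ belongs to $\{y_1,\dots,y_m\}$; $\sum_{i=1}^{m'}|t_i-s_i|\le 2mR+\sum_{i=1}^m|y_i-x_i|$; $\mathrm{d}([s_i,t_i],[s_j,t_j])\ge R$ for all $1\le i\ne j\le m'$; and $\bigcup_{i=1}^m[x_i,y_i]\subset\bigcup_{i=1}^{m'}[s_i,t_i]$.
   Context: For sets $A,B\subset\mathbb{R}$, $\mathrm{d}(A,B):=\inf\{|x-y|:x\in A,y\in B\}$ is the Euclidean distance between them. *)

From HB Require Import structures.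
From mathcomp Require Import all_boot all_order all_algebra.
From mathcomp Require Import all_classical all_reals all_analysis.
Set Implicit Arguments. Unset Strict Implicit. Unset Printing Implicit Defensive.
Import Order.TTheory GRing.Theory Num.Theory.
Local Open Scope classical_set_scope.
Local Open Scope ring_scope.

Definition set_dist (R : realType) (A B : set R) : R :=
  inf [set `|p.1 - p.2| | p in A `*` B].

(* Repeatedly replace two intervals lying at distance less than R by their
   convex hull.  A merge removes one interval and adds less than R to the total
   length, so the potential sum of (length + R) over the family never increases;
   hull endpoints are original endpoints and the covered set only grows.  When no
   two intervals are closer than R, the total length is at most
   sum |y_i - x_i| + m R. *)
From HB Require Import structures.
From mathcomp Require Import all_boot all_order all_algebra.
From mathcomp Require Import all_classical all_reals all_analysis.
From mathcomp Require Import lra.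
Set Implicit Arguments. Unset Strict Implicit. Unset Printing Implicit Defensive.
Import Order.TTheory GRing.Theory Num.Theory.
Local Open Scope classical_set_scope.
Local Open Scope ring_scope.

Lemma pairwiseN_perm (T : eqType) (e : rel T) (s : seq T) :
  ~~ pairwise e s -> exists p q s', perm_eq s [:: p, q & s'] /\ ~~ e p q.
Proof.
elim: s => [|x s IHs] //=; rewrite negb_and => /orP[/allPn[q qs not_xq] | /IHs].
  by exists x, q, (rem q s); rewrite perm_cons perm_to_rem.
move=> [p [q [s' [perm_s not_pq]]]]; exists p, q, (x :: s'); split=> //.
by rewrite perm_sym (perm_catCA [:: p; q] [:: x] s') /= perm_cons perm_sym.
Qed.

Lemma pairwise_sym_nth (T : Type) (e : rel T) (x0 : T) (s : seq T) :
  symmetric e -> pairwise e s ->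
  forall i j : 'I_(size s), i != j -> e (nth x0 s i) (nth x0 s j).
Proof.
move=> e_sym /(pairwiseP x0) e_nth i j.
case: (ltngtP i j) => [ij|ji|/val_inj->]; last by rewrite eqxx.
- by move=> _; apply: e_nth; rewrite ?inE.
- by move=> _; rewrite e_sym; apply: e_nth; rewrite ?inE.
Qed.

Section IntervalMerging.
Variable R : realType.
Implicit Types (r z : R) (p q : R * R) (L M : seq (R * R)).

(* A pair [p] stands for the closed interval [`[p.1, p.2]]. *)
Definition proper_itv p := p.1 <= p.2.
Definition itv_len p := p.2 - p.1.
Definition itv_hull p q := (Num.min p.1 q.1, Num.max p.2 q.2).
Definition itv_sep r p q := (p.2 + r <= q.1) || (q.2 + r <= p.1).
Definition covered L : pred R := [pred z | has (fun p => z \in `[p.1, p.2]) L].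
Definition weight r L := \sum_(p <- L) (itv_len p + r).

Lemma itv_sepC r : symmetric (itv_sep r).
Proof. by move=> p q; rewrite /itv_sep orbC. Qed.

Lemma set_dist_itv_ge r (a b c d : R) : a <= b -> c <= d ->
  (b + r <= c) || (d + r <= a) -> r <= set_dist [set` `[a, b]] [set` `[c, d]].
Proof.
move=> le_ab le_cd sep; apply: lb_le_inf.
  by exists `|a - c|, (a, c) => //; split; rewrite /= in_itv /= lexx ?le_ab ?le_cd.
move=> _ [[u v] [/= + +] <-]; rewrite !in_itv /= => /andP[au ub] /andP[cv vd].
by case/orP: sep => sep; [rewrite distrC|]; apply: le_trans (ler_norm _); lra.
Qed.

Lemma proper_hull p q : proper_itv p -> proper_itv q -> proper_itv (itv_hull p q).
Proof. by rewrite /proper_itv /= ge_min !le_max => ->. Qed.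

Lemma mem_hulll z p q : z \in `[p.1, p.2] -> z \in `[(itv_hull p q).1, (itv_hull p q).2].
Proof. by rewrite !in_itv /= ge_min le_max => /andP[-> ->]. Qed.

Lemma mem_hullr z p q : z \in `[q.1, q.2] -> z \in `[(itv_hull p q).1, (itv_hull p q).2].
Proof. by rewrite !in_itv /= ge_min le_max => /andP[-> ->]; rewrite !orbT. Qed.

Lemma hull_len_le r p q : 0 <= r -> proper_itv p -> proper_itv q ->
  ~~ itv_sep r p q -> itv_len (itv_hull p q) <= itv_len p + itv_len q + r.
Proof.
rewrite /proper_itv /itv_sep /itv_len negb_or -!ltNge /= => r_ge0 hp hq /andP[pq qp].
by case: (leP p.1 q.1); case: (leP p.2 q.2); lra.
Qed.

Record coarsening r L M : Prop := Coarsening {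
  coarsening_size : (size M <= size L)%N;
  coarsening_fst : {subset map fst M <= map fst L};
  coarsening_snd : {subset map snd M <= map snd L};
  coarsening_proper : all proper_itv M;
  coarsening_weight : weight r M <= weight r L;
  coarsening_covered : {subset covered L <= covered M} }.

Lemma coarsening_trans r L1 L2 L3 :
  coarsening r L1 L2 -> coarsening r L2 L3 -> coarsening r L1 L3.
Proof.
case=> size12 fst12 snd12 _ weight12 cov12 [size23 fst23 snd23 prop3 weight23 cov23].
split=> //.
- exact: leq_trans size12.
- by move=> z /fst23/fst12.
- by move=> z /snd23/snd12.
- exact: le_trans weight12.
- by move=> z /cov12/cov23.
Qed.

Lemma coarsening_perm r L M : all proper_itv L -> perm_eq L M -> coarsening r L M.
Proof.
move=> proper_L perm_LM; split.
- by rewrite (perm_size perm_LM).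
- by move=> z; rewrite (perm_mem (perm_map fst perm_LM)).
- by move=> z; rewrite (perm_mem (perm_map snd perm_LM)).
- by rewrite -(perm_all _ perm_LM).
- by rewrite /weight (perm_big _ perm_LM).
- by move=> z; rewrite !inE (perm_has _ perm_LM).
Qed.

Lemma coarsening_merge r p q L : 0 <= r -> all proper_itv [:: p, q & L] ->
  ~~ itv_sep r p q -> coarsening r [:: p, q & L] (itv_hull p q :: L).
Proof.
move=> r_ge0 /and3P[proper_p proper_q proper_L] not_sep; split=> //=.
- move=> z; rewrite !inE => /orP[/eqP->|->]; last by rewrite !orbT.
  by rewrite minEle; case: ifP; rewrite eqxx ?orbT.
- move=> z; rewrite !inE => /orP[/eqP->|->]; last by rewrite !orbT.
  by rewrite maxEle; case: ifP; rewrite eqxx ?orbT.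
- by rewrite proper_hull.
- rewrite /weight !big_cons addrA lerD2r.
  by have := hull_len_le r_ge0 proper_p proper_q not_sep; lra.
- by move=> z; rewrite !inE /= => /or3P[/(mem_hulll q)|/(mem_hullr p)|] ->; rewrite ?orbT.
Qed.

Lemma exists_separated_coarsening r L : 0 <= r -> all proper_itv L ->
  exists M, coarsening r L M /\ pairwise (itv_sep r) M.
Proof.
move=> r_ge0; have [n] := ubnP (size L); elim: n L => // n IHn L size_L proper_L.
have [sep_L | /pairwiseN_perm [p [q [L' [perm_L not_sep]]]]] :=
  boolP (pairwise (itv_sep r) L).
  by exists L; split=> //; apply: coarsening_perm.
have proper_pqL' : all proper_itv [:: p, q & L'] by rewrite -(perm_all _ perm_L).
have size_merged : (size (itv_hull p q :: L') < n)%N.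
  by rewrite (perm_size perm_L) in size_L.
have proper_merged : all proper_itv (itv_hull p q :: L').
  by case/and3P: proper_pqL' => proper_p proper_q proper_L'; rewrite /= proper_hull.
have [M [merged_M sep_M]] := IHn _ size_merged proper_merged.
exists M; split=> //; apply: coarsening_trans (coarsening_perm r proper_L perm_L) _.
exact: coarsening_trans (coarsening_merge r_ge0 proper_pqL' not_sep) merged_M.
Qed.

Lemma sum_abs_nth_len L (d : R * R) : all proper_itv L ->
  \sum_(i < size L) `|(nth d L i).2 - (nth d L i).1| = \sum_(p <- L) itv_len p.
Proof.
move=> /allP proper_L; rewrite (big_nth d) big_mkord; apply: eq_bigr => i _.
by rewrite ger0_norm // subr_ge0; apply/proper_L/mem_nth.
Qed.

Lemma sum_len_le_weight r L : 0 <= r -> \sum_(p <- L) itv_len p <= weight r L.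
Proof. by move=> r_ge0; apply: ler_sum => p _; rewrite lerDl. Qed.

Lemma covered_nth L (d : R * R) z :
  z \in covered L -> exists i : 'I_(size L), z \in `[(nth d L i).1, (nth d L i).2].
Proof. by rewrite inE => /(has_nthP d)[i lt_iL]; exists (Ordinal lt_iL). Qed.

End IntervalMerging.

Theorem lemma5p6 (R : realType) (r : R) (m : nat) (x y : 'I_m -> R) :
  0 < r -> (forall i, x i <= y i) ->
  exists (m' : nat) (s t : 'I_m' -> R),
    [/\ (m' <= m)%N,
        (forall i, exists j, s i = x j) /\
        (forall i, exists j, t i = y j),
        \sum_(i < m') `|t i - s i| <= 2 * m%:R * r + \sum_(i < m) `|y i - x i|,
        (forall i j : 'I_m', i != j -> r <= set_dist [set` `[s i, t i]] [set` `[s j, t j]]) &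
        \bigcup_(i in [set: 'I_m]) [set` `[x i, y i]] `<=` \bigcup_(i in [set: 'I_m']) [set` `[s i, t i]]].
Proof.
move=> r_gt0 le_xy; have r_ge0 := ltW r_gt0.
pose L := [seq (x i, y i) | i <- enum 'I_m].
have proper_L : all (@proper_itv R) L by apply/allP => _ /mapP[i _ ->]; apply: le_xy.
have [M [[size_M fst_M snd_M proper_M weight_M cov_M] sep_M]] :=
  exists_separated_coarsening r_ge0 proper_L.
have weight_L : weight r L = \sum_(i < m) `|y i - x i| + r *+ m.
  rewrite /weight big_map big_enum big_split sumr_const card_ord /=.
  by congr (_ + _); apply: eq_bigr => i _; rewrite ger0_norm ?subr_ge0.
pose d := (0, 0) : R * R.
have mem_nthM (i : 'I_(size M)) : nth d M i \in M by apply: mem_nth.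
exists (size M), (fun i => (nth d M i).1), (fun i => (nth d M i).2); split.
- by rewrite size_map size_enum_ord in size_M.
- split=> i; apply/codomP; rewrite codomE.
  + by have /fst_M := map_f fst (mem_nthM i); rewrite -map_comp.
  + by have /snd_M := map_f snd (mem_nthM i); rewrite -map_comp.
- have rm_ge0 : 0 <= r * m%:R by rewrite mulr_ge0.
  have := le_trans (sum_len_le_weight _ r_ge0) weight_M.
  by rewrite sum_abs_nth_len // weight_L -mulr_natr; lra.
- move=> i j ij; have /allP proper_nth := proper_M.
  apply: set_dist_itv_ge; [exact/proper_nth | exact/proper_nth |].
  exact: pairwise_sym_nth (@itv_sepC R r) sep_M i j ij.
- move=> z [i _]; rewrite /= => z_xy.
  have /cov_M/(covered_nth d)[k z_k] : z \in covered L.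
    by apply/hasP; exists (x i, y i); rewrite ?map_f ?mem_enum.
  by exists k.
Qed.
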